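(* Let $X \subset \mathbb{R}^d$ be a closed subset, let $\mu$ be an admissible, $X$-indeterminate measure, and let $S \subset X$ be the closed support of $\mu$. Let $\phi \in C_p(X)$ satisfy $$ \inf_{p \leq \phi \text{ on } X} \int (\phi-p)\, d\mu > 0$$ (infimum over real polynomials $p$). Let $\psi \in C_p(X)$ satisfy $\psi(x) \leq \phi(x)$ for all $x \in X \setminus S$. Define $\Phi(x)=\phi(x)$ for $x\in S$ and $\Phi(x)=\psi(x)$ for $x \in X\setminus S$. Then $$ \inf_{p \leq \Phi \text{ on } X} \int (\Phi-p)\, d\mu > 0.$$
   Context: An admissible measure on a closed set $X \subseteq \mathbb{R}^d$ is a positive Radon measure $\mu$ supported on $X$ such that $\int_X |p|\,d\mu<\infty$ for every polynomial $p$. $\mu$ is $X$-indeterminate if there is an admissible measure on $X$, distinct from $\mu$, giving the same integral to every polynomial. $C_p(X)$ denotes the continuous real functions $f$ on $X$ with $|f(x)|\le C(1+\|x\|)^n$ for some constants $C,n$. *)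

From HB Require Import structures.
From mathcomp Require Import all_boot all_order all_algebra.
From mathcomp Require Import all_classical all_reals all_analysis.
From mathcomp Require mpoly.
Set Implicit Arguments. Unset Strict Implicit. Unset Printing Implicit Defensive.
Import Order.TTheory GRing.Theory Num.Theory.
Import numFieldNormedType.Exports.
Local Open Scope classical_set_scope.
Local Open Scope ring_scope.

(* R^d is modelled as row vectors 'rV[R]_d (with its normed topology).
   Rd R d is the same carrier equipped with the Borel sigma-algebra
   (the sigma-algebra generated by the open sets). *)
Definition Rd (R : realType) (d : nat) :=
  g_sigma_algebraType (@open 'rV[R]_d).

Definition peval (R : realType) (d : nat) (p : mpoly.mpoly d R)
  (x : 'rV[R]_d) : R := mpoly.meval (fun i : 'I_d => x ord0 i) p.

Definition supported_on (R : realType) (d : nat)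
  (mu : {measure set (Rd R d) -> \bar R}) (X : set 'rV[R]_d) : Prop :=
  mu (~` X : set (Rd R d)) = 0%E.

(* admissible measure on X: positive (Radon) Borel measure supported on X
   integrating |p| finitely for every polynomial p.  (Any such measure is
   finite, hence Radon on R^d.) *)
Definition admissible (R : realType) (d : nat) (X : set 'rV[R]_d)
  (mu : {measure set (Rd R d) -> \bar R}) : Prop :=
  supported_on mu X /\
  forall p : mpoly.mpoly d R,
    (\int[mu]_x (`|peval p x|)%:E < +oo)%E.

Definition X_indeterminate (R : realType) (d : nat) (X : set 'rV[R]_d)
  (mu : {measure set (Rd R d) -> \bar R}) : Prop :=
  exists nu : {measure set (Rd R d) -> \bar R},
    admissible X nu /\
    (exists A : set (Rd R d), measurable A /\ nu A <> mu A) /\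
    forall p : mpoly.mpoly d R,
      (\int[nu]_x (peval p x)%:E = \int[mu]_x (peval p x)%:E)%E.

Definition msupport (R : realType) (d : nat)
  (mu : {measure set (Rd R d) -> \bar R}) : set 'rV[R]_d :=
  [set x | forall e : R, 0 < e -> (0 < mu (ball x e : set (Rd R d)))%E].

Definition Cp (R : realType) (d : nat) (X : set 'rV[R]_d)
  (f : 'rV[R]_d -> R) : Prop :=
  {within X, continuous f} /\
  exists (C : R) (n : nat), forall x, X x -> `|f x| <= C * (1 + `|x|) ^+ n.

Definition gap (R : realType) (d : nat) (X : set 'rV[R]_d)
  (mu : {measure set (Rd R d) -> \bar R}) (f : 'rV[R]_d -> R) : \bar R :=
  ereal_inf [set (\int[mu]_(x in (X : set (Rd R d))) (f x - peval p x)%:E)%E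
            | p in [set p : mpoly.mpoly d R | forall x, X x -> peval p x <= f x]].

From HB Require Import structures.
From mathcomp Require Import all_boot all_order all_algebra.
From mathcomp Require Import all_classical all_reals all_analysis.
From mathcomp Require mpoly.
From mathcomp Require Import lra.
Import Order.TTheory GRing.Theory Num.Theory.
Import numFieldNormedType.Exports.
Local Open Scope classical_set_scope.
Local Open Scope ring_scope.

(* Two facts give the theorem:
   - Phi <= phi on X, since psi <= phi on X \ S; so every polynomial p with
     p <= Phi on X also satisfies p <= phi on X;
   - R^d \ S is mu-null (it is covered by countably many null balls with
     rational centres and radii), so Phi = phi mu-almost everywhere and
     \int_X (Phi - p) dmu = \int_X (phi - p) dmu for such p.
   Hence gap(Phi), an infimum of the same integrals over fewer polynomials,
   dominates gap(phi) > 0. *)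

Section ae_monotonicity.
Import HBNNSimple.
Local Open Scope ereal_scope.
Context d (T : measurableType d) (R : realType).
Variable mu : {measure set T -> \bar R}.

(* Unlike the library's [ae_ge0_le_integral], no measurability of f, g or D
   is required: we compare the defining suprema over simple functions. *)
Lemma ge0_ae_le_integral_any (D : set T) (f g : T -> \bar R) :
  (forall x, D x -> 0 <= f x) -> (forall x, D x -> 0 <= g x) ->
  {ae mu, forall x, D x -> f x <= g x} ->
  \int[mu]_(x in D) f x <= \int[mu]_(x in D) g x.
Proof.
move=> f0 g0 [N [mN N0 fgN]].
rewrite (ge0_integralE _ f0) (ge0_integralE _ g0).
apply: ge_ereal_sup => _ [h hf <-].
(* h, cut down to zero on the null set N, is still below f and now below g *)
have mCN : measurable (~` N) by exact: measurableC.
pose hN := mul_nnsfun h (indic_nnsfun R mCN).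
have hNE x : hN x = (h x * \1_(~` N) x)%R by [].
have -> : sintegral mu h = sintegral mu hN.
  rewrite -!integralT_nnsfun; apply: ae_eq_integral => //.
  - by apply/measurable_realfun.measurable_EFinP; exact: measurable_funPT.
  - by apply/measurable_realfun.measurable_EFinP; exact: measurable_funPT.
  exists N; split => // x /= hx; apply: contrapT => Nx; apply: hx => _ /=.
  by change ((h x)%:E = (hN x)%:E); rewrite hNE indicE mem_set ?mulr1.
apply: ereal_sup_ubound; exists hN => // x.
have fg_offN : ~ N x -> D x -> f x <= g x.
  by move=> Nx Dx; apply: contrapT => nfg; apply: Nx; apply: fgN => /(_ Dx).
rewrite hNE indicE; have [/set_mem Nx|/negP Nx] := boolP (x \in ~` N).
  rewrite mulr1; apply: le_trans (hf x) _; rewrite !patchE.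
  by case: ifPn => // /set_mem Dx; exact: fg_offN.
by rewrite mulr0 patchE; case: ifPn => // /set_mem Dx; exact: g0.
Qed.

End ae_monotonicity.

Section support_complement.
Variables (R : realType) (d : nat).

Lemma measurable_ball_Rd (x : 'rV[R]_d) (e : R) :
  measurable (ball x e : set (Rd R d)).
Proof. exact: sub_sigma_algebra (ball_open x e). Qed.

Lemma rational_point_in_ball (x : 'rV[R]_d) (e : R) : 0 < e ->
  exists q : 'rV[rat]_d, ball x e (map_mx ratr q).
Proof.
move=> e0.
have /fin_all_exists [q hq] : forall j : 'I_d,
    exists r : rat, ratr r \in `](x ord0 j - e), (x ord0 j + e)[.
  move=> j; apply: rat_in_itvoo; lra.
exists (\row_j q j); split => // i j.
rewrite (ord1 i) /ball /= !mxE ltr_norml.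
by move: (hq j); rewrite in_itv /= => /andP[? ?]; apply/andP; split; lra.
Qed.

Definition rational_ball (c : 'rV[rat]_d * rat) : set (Rd R d) :=
  ball (map_mx ratr c.1 : 'rV[R]_d) (ratr c.2 : R).

Variable mu : {measure set (Rd R d) -> \bar R}.

(* Outside the support, a point lies in a mu-null rational ball: shrink the
   null ball around it to a rational one still containing the point. *)
Lemma not_msupport_rational_ball (x : 'rV[R]_d) : ~ msupport mu x ->
  exists c, mu (rational_ball c) = 0%E /\ rational_ball c x.
Proof.
move=> /existsNP [e /not_implyP [e0 /negP]]; rewrite -leNgt => mue.
have [q xq] := @rational_point_in_ball x (e / 3) ltac:(lra).
have [r] := @rat_in_itvoo R (e / 3) (e * 2 / 3) ltac:(lra).
rewrite in_itv /= => /andP [r1 r2].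
have sub : rational_ball (q, r) `<=` ball x e.
  move=> y /= qy; apply: (@le_ball _ _ _ (e / 3 + ratr r)); first lra.
  exact: ball_triangle xq qy.
exists (q, r); split.
  apply/eqP; rewrite eq_le measure_ge0 andbT (le_trans _ mue) //.
  by apply: le_measure => //; rewrite inE; exact: measurable_ball_Rd.
by apply: (@le_ball _ _ _ (e / 3)); [lra | exact: ball_sym].
Qed.

(* The complement of the closed support is mu-null: it is covered by the
   countably many null rational balls. *)
Lemma ae_msupport : {ae mu, forall x, msupport mu x}.
Proof.
pose F (n : nat) : set (Rd R d) :=
  if unpickle n is Some c then
    if mu (rational_ball c) == 0%E then rational_ball c else set0
  else set0.
have mF n : measurable (F n).
  rewrite /F; case: (unpickle n) => [c|] //; case: ifP => // _.
  exact: measurable_ball_Rd.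
have F0 n : mu (F n) = 0%E.
  rewrite /F; case: (unpickle n) => [c|]; last exact: measure0.
  by case: ifP => [/eqP //|_]; exact: measure0.
exists (\bigcup_n F n); split; first exact: bigcupT_measurable.
- apply/eqP; rewrite eq_le measure_ge0 andbT.
  have := @measure_sigma_subadditive _ _ _ mu _ F mF (bigcupT_measurable F mF) (@subset_refl _ _).
  by rewrite eseries0.
- move=> x /not_msupport_rational_ball [c [c0 cx]].
  by exists (pickle c) => //; rewrite /F pickleK c0 eqxx.
Qed.

End support_complement.
Arguments ae_msupport {R d}.

(* The gap is monotone in this sense: if g <= f on X and f <= g mu-a.e. on X,
   then every polynomial below g is below f with a no smaller integral, so
   gap f <= gap g. *)
Lemma gap_le (R : realType) (d : nat) (X : set 'rV[R]_d)
    (mu : {measure set (Rd R d) -> \bar R}) (f g : 'rV[R]_d -> R) :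
  (forall x, X x -> g x <= f x) ->
  {ae mu, forall x : Rd R d, X x -> f x <= g x} ->
  (gap X mu f <= gap X mu g)%E.
Proof.
move=> gf ae_fg; apply/ereal_infP => _ [p /= pg <-].
have pf x : X x -> peval p x <= f x by move=> Xx; exact: le_trans (pg x Xx) (gf x Xx).
apply: le_trans (ereal_inf_lbound _) _; first by exists p.
apply: ge0_ae_le_integral_any.
- by move=> x Xx; rewrite lee_fin subr_ge0; exact: pf.
- by move=> x Xx; rewrite lee_fin subr_ge0; exact: pg.
- apply: filterS ae_fg => x /= fg Xx.
  by rewrite lee_fin lerD2r; exact: fg.
Qed.

Theorem mainTheorem6 (R : realType) (d : nat) (X : set 'rV[R]_d)
  (mu : {measure set (Rd R d) -> \bar R})
  (phi psi : 'rV[R]_d -> R) :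
  closed X ->
  admissible X mu ->
  X_indeterminate X mu ->
  Cp X phi ->
  (0 < gap X mu phi)%E ->
  Cp X psi ->
  (forall x, X x -> ~ msupport mu x -> psi x <= phi x) ->
  (0 < gap X mu (fun x => if x \in msupport mu then phi x else psi x))%E.
Proof.
move=> _ _ _ _ gap_phi _ psi_phi; apply: lt_le_trans gap_phi _.
apply: gap_le.
- move=> x Xx; case: ifPn => // /negP notS.
  by apply: psi_phi => // Sx; apply: notS; exact: mem_set.
- case: (ae_msupport mu) => N [mN N0 notS_N].
  exists N; split; [exact: mN | exact: N0 |].
  move=> x /= notfg; apply: notS_N => Sx; apply: notfg => _.
  by rewrite mem_set.
Qed.
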